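(* Let \(\mathcal{I}\) be an instance of 3-SAT and let \(G(\mathcal{I})\), \(T(\mathcal{I})\) be as constructed below. If \(\mathcal{I}\) does not have a satisfying assignment, then \(T(\mathcal{I})\) is not the \(\mathcal{F}\)-tree of any MNS ordering of \(G(\mathcal{I})\), and therefore also not the \(\mathcal{F}\)-tree of any MCS ordering of \(G(\mathcal{I})\).
   Context: Let \(\mathcal{I}\) have variables \(x_1,\dots,x_k\) and clauses \(C_1,\dots,C_l\), each a disjunction of three literals. \(G(\mathcal{I})\) has vertices: literal vertices \(X=\{x_1,\dots,x_k,\overline{x_1},\dots,\overline{x_k}\}\), clause vertices \(c_1,\dots,c_l\), and six vertices \(r,p,q,a,b,t\). Edges: any two vertices of \(X\) are adjacent except the pairs \(x_j\overline{x_j}\); the clause vertices are pairwise nonadjacent; \(c_i\) is adjacent to every vertex of \(X\) except the three literal vertices of the literals of \(C_i\); each of \(r,p,q,a\) is adjacent to all literal vertices and all clause vertices; \(b\) is adjacent to all literal vertices; additionally the edges \(ab,ap,aq,bq,br,bt,pr,qr,qt\); no other edges. \(T(\mathcal{I})\) is the spanning tree consisting of all edges of \(G(\mathcal{I})\) incident to \(r\) together with the edges \(pa\) and \(bt\). With \(n\) the number of vertices: an MCS ordering is produced by repeatedly choosing an unnumbered vertex with the largest number of numbered neighbors; an MNS ordering uses set labels (all \(\emptyset\), start vertex gets \(\{n+1\}\); repeatedly pick an unnumbered vertex with inclusion-maximal label as \(v_j\) and add \(j\) to the labels of its unnumbered neighbors); ties are arbitrary. The \(\mathcal{F}\)-tree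 of an ordering \((v_1,\dots,v_n)\) has, for each \(v\ne v_1\), an edge from \(v\) to its leftmost neighbor in the ordering. *)

From mathcomp Require Import all_boot.
Set Implicit Arguments. Unset Strict Implicit. Unset Printing Implicit Defensive.

(* A literal over variables x_0..x_{k-1}: (i, true) = x_i, (i, false) = ~x_i. *)
Definition lit (k : nat) := ('I_k * bool)%type.

Definition satisfiable (k l : nat) (cl : 'I_l -> 'I_3 -> lit k) : Prop :=
  exists asg : 'I_k -> bool, forall j : 'I_l, exists m : 'I_3,
    asg (cl j m).1 = (cl j m).2.

(* Vertices of G(I): literal vertices, clause vertices, and six special
   vertices indexed by 'I_6 : 0 = r, 1 = p, 2 = q, 3 = a, 4 = b, 5 = t. *)
Definition vert (k l : nat) := ((lit k + 'I_l) + 'I_6)%type.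

Definition litv {k l} (L : lit k) : vert k l := inl (inl L).
Definition clv {k l} (j : 'I_l) : vert k l := inl (inr j).
Definition vr {k l} : vert k l := inr (@Ordinal 6 0 isT).
Definition vp {k l} : vert k l := inr (@Ordinal 6 1 isT).
Definition vq {k l} : vert k l := inr (@Ordinal 6 2 isT).
Definition va {k l} : vert k l := inr (@Ordinal 6 3 isT).
Definition vb {k l} : vert k l := inr (@Ordinal 6 4 isT).
Definition vt {k l} : vert k l := inr (@Ordinal 6 5 isT).

(* edges among the six special vertices: ab, ap, aq, bq, br, bt, pr, qr, qt *)
Definition special_edges : seq (nat * nat) :=
  [:: (3,4); (3,1); (3,2); (4,2); (4,0); (4,5); (1,0); (2,0); (2,5)].

Definition special_adj (x y : 'I_6) : bool :=
  ((val x, val y) \in special_edges) || ((val y, val x) \in special_edges).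

Definition adj (k l : nat) (cl : 'I_l -> 'I_3 -> lit k) (u v : vert k l) : bool :=
  match u, v with
  | inl (inl L), inl (inl L') => L.1 != L'.1
  | inl (inl L), inl (inr j) | inl (inr j), inl (inl L) =>
      ~~ [exists m : 'I_3, cl j m == L]
  | inl (inr _), inl (inr _) => false
  | inl (inl _), inr o | inr o, inl (inl _) => val o < 5   (* r,p,q,a,b *)
  | inl (inr _), inr o | inr o, inl (inr _) => val o < 4   (* r,p,q,a *)
  | inr o, inr o' => special_adj o o'
  end.

Definition tadj (k l : nat) (cl : 'I_l -> 'I_3 -> lit k) (u v : vert k l) : bool :=
  (adj cl u v && ((u == vr) || (v == vr)))
  || ((u == vp) && (v == va)) || ((u == va) && (v == vp))
  || ((u == vb) && (v == vt)) || ((u == vt) && (v == vb)).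

Section Orderings.
Variables (V : finType) (e : rel V).

Definition is_ordering (s : seq V) : Prop := uniq s /\ forall v, v \in s.

Definition is_MCS (s : seq V) : Prop :=
  is_ordering s /\
  forall (j : nat) (x0 w : V), j < size s -> w \notin take j s ->
    count (fun u => e u w) (take j s) <= count (fun u => e u (nth x0 s j)) (take j s).

(* MNS: the label of an unnumbered vertex w after numbering v_1..v_j is the
   set of indices i <= j with v_i adjacent to w (0-based positions here);
   v_{j+1} must have an inclusion-maximal label among unnumbered vertices.
   (The start vertex's special label {n+1} just makes v_1 = start, which is
   arbitrary.) *)
Definition mns_label (x0 : V) (s : seq V) (j : nat) (w : V) : seq nat :=
  [seq i <- iota 0 j | e (nth x0 s i) w].

Definition is_MNS (s : seq V) : Prop :=
  is_ordering s /\
  forall (j : nat) (x0 w : V), j < size s -> w \notin take j s ->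
    {subset mns_label x0 s j (nth x0 s j) <= mns_label x0 s j w} ->
    {subset mns_label x0 s j w <= mns_label x0 s j (nth x0 s j)}.

Definition leftmost_nb (s : seq V) (u v : V) : bool :=
  e u v && [forall w, e u w ==> (index v s <= index w s)].

Definition ftree_adj (s : seq V) (u v : V) : bool :=
  ((u \notin take 1 s) && leftmost_nb s u v)
  || ((v \notin take 1 s) && leftmost_nb s v u).

Definition is_Ftree_of (t : rel V) (s : seq V) : Prop :=
  forall u v, t u v = ftree_adj s u v.

End Orderings.

From mathcomp Require Import all_boot.
Set Implicit Arguments. Unset Strict Implicit. Unset Printing Implicit Defensive.

(* MCS orderings are MNS orderings, so let s be an MNS ordering whose F-tree is
   T(I).  All edges at the first vertex are F-tree edges, and r is the only
   vertex with this property in T(I), so r is first; as b is the only tree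
   neighbour of t and p the only one of a, b precedes q and p precedes b.  The MNS rule (a vertex whose label is
   contained in the label of a later vertex has the same label) then puts b
   before t and before every clause, and some literal of each clause before b.
   Make x_i true iff x_i precedes its negation.  The earliest literal of a
   clause is true: otherwise its negation precedes it, every earlier neighbour
   of the literal also sees the clause, and the MNS rule makes the negation a
   neighbour of the literal. *)

Section Orderings.
Variables (V : finType) (e : rel V) (s : seq V).
Local Notation "u ≺ v" := (index u s < index v s) (at level 70).

Lemma size_mns_label x0 j w : j <= size s ->
  size (mns_label e x0 s j w) = count (e^~ w) (take j s).
Proof.
move=> le_j_s; rewrite /mns_label size_filter -(map_nth_iota0 x0 le_j_s).
by rewrite count_map.
Qed.

Lemma MCS_MNS : is_MCS e s -> is_MNS e s.
Proof.
move=> [ord_s MCS_s]; split=> // j x0 w lt_j_s w_new sub_vw.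
have uniq_label : uniq (mns_label e x0 s j (nth x0 s j)).
  by rewrite filter_uniq ?iota_uniq.
have le_size : size (mns_label e x0 s j w) <= size (mns_label e x0 s j (nth x0 s j)).
  by rewrite !size_mns_label ?(ltnW lt_j_s) ?MCS_s.
by have [_ eq_labels] := uniq_min_size uniq_label sub_vw le_size; move=> i; rewrite eq_labels.
Qed.

(* When v was numbered, w was a candidate with a label at least as large. *)
Lemma MNS_earlier_nbrs v w : is_MNS e s -> v ≺ w ->
  (forall u, u ≺ v -> e u v -> e u w) -> forall u, u ≺ v -> e u w -> e u v.
Proof.
move=> [[uniq_s all_s] MNS_s] v_w sub_vw u u_v e_uw.
have v_pos : index v s < size s by rewrite index_mem.
have w_new : w \notin take (index v s) s by rewrite in_take // -leqNgt ltnW.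
have mem_label x i : (i \in mns_label e v s (index v s) x) = (i < index v s) && e (nth v s i) x.
  by rewrite mem_filter mem_iota andbC.
have := MNS_s _ v w v_pos w_new; rewrite nth_index // => max_v.
have /max_v : {subset mns_label e v s (index v s) v <= mns_label e v s (index v s) w}.
  move=> i; rewrite !mem_label => /andP[i_v e_iv]; rewrite i_v sub_vw //.
  by rewrite index_uniq // (ltn_trans i_v).
by move=> /(_ (index u s)); rewrite !mem_label u_v nth_index //; apply.
Qed.

Lemma Ftree_leftmost_nb t u w : is_Ftree_of e t s -> 0 < index u s -> e u w ->
  exists2 v, t u v & index v s <= index w s.
Proof.
move=> Ftree_s u_pos e_uw.
have [v e_uv v_min] := arg_minnP (fun v => index v s) e_uw.
exists v; last exact: v_min.
rewrite Ftree_s /ftree_adj; apply/orP; left.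
have -> : u \notin take 1 s.
  case: (boolP (u \in s)) => [u_s | ]; first by rewrite in_take // -leqNgt.
  by apply: contra; apply: mem_take.
by rewrite /leftmost_nb e_uv; apply/forallP => x; apply/implyP; apply: v_min.
Qed.

End Orderings.

Section Gadget.
Variables (k l : nat) (cl : 'I_l -> 'I_3 -> lit k).
Implicit Types (u v : vert k l) (c : 'I_l).

Ltac case_special o := case: o => [[|[|[|[|[|[|?]]]]]] ?].
Ltac vcase u := let o := fresh "o" in case: u => [[?|?]|o]; last case_special o.

Lemma tadj_vt v : tadj cl vt v -> v == vb.
Proof. by vcase v. Qed.

Lemma tadj_va v : tadj cl va v -> v == vp.
Proof. by vcase v. Qed.

Lemma adj_vt u : adj cl u vt -> (u == vb) || (u == vq).
Proof. by vcase u. Qed.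

Lemma adj_vb_vq u : adj cl u vb -> u != vq -> adj cl u vq.
Proof. by vcase u. Qed.

Lemma adj_vb_cases c u : adj cl u vb ->
  [|| u == vq, u == vt, adj cl u (clv c) | [exists m, u == litv (cl c m)]].
Proof.
case: u => [[L|//]|o]; last by case_special o.
move=> _; case: (boolP [exists m, cl c m == L]) => [/existsP[m /eqP <-]|L_notin_c].
  by apply/or4P; apply: Or44; apply/existsP; exists m.
by apply/or4P; apply: Or43.
Qed.

Lemma adj_litv_cases y c u : adj cl u (litv y) ->
  [|| [exists L, u == litv L], [exists c', u == clv c'], (u == vq) || (u == vb)
    | adj cl u (clv c)].
Proof.
case: u => [[L|c']|o] adj_u.
- by apply/orP; left; apply/existsP; exists L.
- by apply/or3P; apply: Or32; apply/existsP; exists c'.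
- by move: adj_u; case_special o => //= _; rewrite ?orbT.
Qed.

Lemma exists_nontree_nb v : 0 < l -> v != vr ->
  exists u, [&& u != v, adj cl u v & ~~ tadj cl u v].
Proof.
move=> l_gt0; case: v => [[L|c]|o].
- by exists vp.
- by exists vp.
- case_special o => //.
  + by exists (clv (Ordinal l_gt0)).
  + by exists va.
  + by exists vq.
  + by exists vq.
  + by exists vq.
Qed.

Lemma adj_litv_clv L c :
  adj cl (litv L) (clv c) = ~~ [exists m, cl c m == L].
Proof. by []. Qed.

Variable s : seq (vert k l).
Hypotheses (l_gt0 : 0 < l) (MNS_s : is_MNS (adj cl) s)
  (Ftree_s : is_Ftree_of (adj cl) (tadj cl) s).
Local Notation "u ≺ v" := (index u s < index v s) (at level 70).

Let all_s u : u \in s := MNS_s.1.2 u.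

Lemma index_injective : injective (index^~ s).
Proof. by move=> u v; apply: index_inj; rewrite ?all_s. Qed.

Lemma before_of_leq u v : index u s <= index v s -> u != v -> u ≺ v.
Proof. by rewrite ltn_neqAle (inj_eq index_injective) => -> ->. Qed.

Lemma before_asym u v : u ≺ v -> (v ≺ u) = false.
Proof. by move=> /ltnW; rewrite leqNgt => /negbTE. Qed.

Lemma vr_first : index vr s = 0.
Proof.
have s_gt0 : 0 < size s by apply: leq_ltn_trans (leq0n (index vr s)) _; rewrite index_mem.
set v1 := nth vr s 0.
have v1_first : index v1 s = 0 by rewrite index_uniq // MNS_s.1.1.
apply/eqP; apply: contraT => r_not_first.
have v1_ne_r : v1 != vr by apply: contraNneq r_not_first => <-; rewrite v1_first.
have [u /and3P[u_ne_v1 adj_uv1 nontree]] := exists_nontree_nb l_gt0 v1_ne_r.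
have u_pos : 0 < index u s by rewrite lt0n -[X in _ != X]v1_first (inj_eq index_injective).
have [v tree_uv] := Ftree_leftmost_nb Ftree_s u_pos adj_uv1.
rewrite v1_first leqn0 => /eqP v_first.
have v_eq : v = v1 by apply: index_injective; rewrite v_first v1_first.
by move: nontree; rewrite -v_eq tree_uv.
Qed.

Lemma not_first u : u != vr -> 0 < index u s.
Proof. by move=> u_ne_r; rewrite lt0n -[X in _ != X]vr_first (inj_eq index_injective). Qed.

Lemma vb_before_vq : vb ≺ vq.
Proof.
have [v /tadj_vt/eqP -> le_bq] :=
  Ftree_leftmost_nb Ftree_s (@not_first vt isT) (isT : adj cl vt vq).
exact: before_of_leq.
Qed.

Lemma vp_before_vb : vp ≺ vb.
Proof.
have [v /tadj_va/eqP -> le_pb] :=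
  Ftree_leftmost_nb Ftree_s (@not_first va isT) (isT : adj cl va vb).
exact: before_of_leq.
Qed.

Lemma vb_before_vt : vb ≺ vt.
Proof.
rewrite ltnNge; apply/negP => le_tb.
have t_b : vt ≺ vb := before_of_leq le_tb isT.
have t_q : vt ≺ vq := ltn_trans t_b vb_before_vq.
suff : adj cl vr vt by [].
apply: (MNS_earlier_nbrs MNS_s t_q _ (_ : vr ≺ vt) isT).
  move=> u u_t /adj_vt /orP[] /eqP u_eq.
  - by rewrite u_eq (before_asym t_b) in u_t.
  - by rewrite u_eq (before_asym t_q) in u_t.
by rewrite vr_first not_first.
Qed.

Lemma vb_before_clv c : vb ≺ clv c.
Proof.
rewrite ltnNge; apply/negP => le_cb.
have c_b : clv c ≺ vb := before_of_leq le_cb isT.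
suff : adj cl (clv c) vb by [].
apply: (MNS_earlier_nbrs MNS_s vb_before_vq _ c_b isT) => u u_b adj_ub.
apply: adj_vb_vq adj_ub _; apply/eqP => u_q.
by rewrite u_q (before_asym vb_before_vq) in u_b.
Qed.

Lemma clause_litv_before_vb c : exists m, litv (cl c m) ≺ vb.
Proof.
apply/existsP; apply: contraT; rewrite negb_exists => /forallP lits_after_b.
suff : adj cl vp vb by [].
apply: (MNS_earlier_nbrs MNS_s (vb_before_clv c) _ vp_before_vb isT) => u u_b adj_ub.
case/or4P: (adj_vb_cases c adj_ub) => [/eqP u_q|/eqP u_t|//|/existsP[m /eqP u_m]].
- by rewrite u_q (before_asym vb_before_vq) in u_b.
- by rewrite u_t (before_asym vb_before_vt) in u_b.
- by move: (lits_after_b m); rewrite -u_m u_b.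
Qed.

Definition order_assignment (i : 'I_k) : bool := litv (i, true) ≺ litv (i, false).

Lemma order_assignment_false y :
  order_assignment y.1 != y.2 -> litv (y.1, ~~ y.2) ≺ litv y.
Proof.
case: y => i [] /=; rewrite /order_assignment; case: ltnP => // le_FT _.
by apply: before_of_leq le_FT _; apply/eqP => -[].
Qed.

Lemma earliest_literal_satisfied c m :
  (forall m', index (litv (cl c m)) s <= index (litv (cl c m')) s) ->
  order_assignment (cl c m).1 = (cl c m).2.
Proof.
set y := cl c m => y_min.
have [//|/order_assignment_false ybar_y] := eqVneq (order_assignment y.1) y.2.
have [m1 m1_b] := clause_litv_before_vb c.
have y_b : litv y ≺ vb := leq_ltn_trans (y_min m1) m1_b.
have y_c : litv y ≺ clv c := ltn_trans y_b (vb_before_clv c).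
have earlier_adj_c L : litv L ≺ litv y -> adj cl (litv L) (clv c).
  move=> L_y; rewrite adj_litv_clv; apply/existsP => -[m' /eqP cl_m'].
  by move: (y_min m'); rewrite cl_m' leqNgt L_y.
suff : adj cl (litv (y.1, ~~ y.2)) (litv y) by rewrite /= eqxx.
apply: (MNS_earlier_nbrs MNS_s y_c _ ybar_y (earlier_adj_c _ ybar_y)).
move=> u u_y /(adj_litv_cases c).
case/or4P=> [/existsP[L /eqP u_L]|/existsP[c' /eqP u_c']|/orP[/eqP u_q|/eqP u_b]|//].
- by rewrite u_L in u_y *; apply: earlier_adj_c.
- by rewrite u_c' (before_asym (ltn_trans y_b (vb_before_clv c'))) in u_y.
- by rewrite u_q (before_asym (ltn_trans y_b vb_before_vq)) in u_y.
- by rewrite u_b (before_asym y_b) in u_y.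
Qed.

Lemma satisfiable_of_MNS_Ftree : satisfiable cl.
Proof.
exists order_assignment => c.
have [m _ m_min] := arg_minnP (fun m => index (litv (cl c m)) s) (isT : xpredT (@ord0 2)).
by exists m; apply: earliest_literal_satisfied => m'; apply: m_min.
Qed.

End Gadget.

Theorem lemma12 (k l : nat) (cl : 'I_l -> 'I_3 -> lit k) :
  ~ satisfiable cl ->
  (forall s : seq (vert k l), is_MNS (adj cl) s -> ~ is_Ftree_of (adj cl) (tadj cl) s) /\
  (forall s : seq (vert k l), is_MCS (adj cl) s -> ~ is_Ftree_of (adj cl) (tadj cl) s).
Proof.
move=> unsat.
have MNS_not_Ftree s : is_MNS (adj cl) s -> ~ is_Ftree_of (adj cl) (tadj cl) s.
  move=> MNS_s Ftree_s; apply: unsat.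
  have [l0 | l_gt0] := posnP l; last exact: satisfiable_of_MNS_Ftree l_gt0 MNS_s Ftree_s.
  by subst l; exists (fun=> true); case.
by split=> // s /MCS_MNS; apply: MNS_not_Ftree.
Qed.
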